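(* Assume $\mu<0$ and conditions (C1) and (C2). Let $\pi^*_1,\pi^*_2$ be the two marginals of $\pi^*$ on $E$ and $\mu^*=\pi^*(f)$. Then $$\pi^*_1\otimes\pi_Q(f)<\mu^*\quad\text{and}\quad\pi_P\otimes\pi^*_2(f)<\mu^*.$$
   Context: Let $E$ be a finite set and $P,Q$ irreducible aperiodic stochastic $E\times E$ matrices with invariant probability vectors $\pi_P,\pi_Q$; $\pi=\pi_P\otimes\pi_Q$. Let $f:E\times E\to\mathbb Z$ with gcd of its values equal to $1$; $\nu(f)=\sum f\,d\nu$; $\mu=\pi(f)$. A cycle w.r.t. $P$ is a sequence $x_1,\dots,x_n$ with $P(x_k,x_{k+1})>0$ for all $k$, indices mod $n$. (C1): for some $n\ge1$ there are cycles $x_1,\dots,x_n$ w.r.t. $P$ and $y_1,\dots,y_n$ w.r.t. $Q$ with $\sum_kf(x_k,y_k)>0$. (C2): for every $T\ge1$ there are $n\ge1$ and cycles $x_1,\dots,x_n$ w.r.t. $P$ and $y_1,\dots,y_n$ w.r.t. $Q$ with $\sum_kf(x_k,y_k)\ne\sum_kf(x_k,y_{k+T\bmod n})$. Let $\Phi(\theta)_{(x,y),(x',y')}=e^{\theta f(x',y')}P_{x,x'}Q_{y,y'}$, $\varphi(\theta)$ its spectral radius, $\theta^*>0$ the unique positive solution of $\varphi(\theta)=1$, $r^*$ a positive right eigenvector of $\Phi(\theta^* )$ for eigenvalue 1, $R^*_{(x,y),(x',y')}=\frac{r^*(x',y')}{r^*(x,y)}\Phi(\theta^* )_{(x,y),(x',y')}$,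 and $\pi^*$ the invariant probability vector of $R^*$. *)

From HB Require Import structures.
From mathcomp Require Import all_boot all_order all_algebra.
From mathcomp Require Import complex.
From mathcomp Require Import reals.
From mathcomp Require Import sequences exp.
Set Implicit Arguments. Unset Strict Implicit. Unset Printing Implicit Defensive.
Import Order.TTheory GRing.Theory Num.Theory.
Local Open Scope ring_scope.

Fixpoint mpow (R : realType) (T : finType) (A : T -> T -> R) (n : nat) : T -> T -> R :=
  match n with
  | 0 => fun x y => if x == y then 1 else 0
  | n'.+1 => fun x y => \sum_(z : T) mpow A n' x z * A z y
  end.

Definition stochastic (R : realType) (T : finType) (A : T -> T -> R) : Prop :=
  (forall x y, 0 <= A x y) /\ (forall x, \sum_(y : T) A x y = 1).

Definition irreducible (R : realType) (T : finType) (A : T -> T -> R) : Prop :=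
  forall x y, exists n : nat, 0 < mpow A n x y.

(* period of every state is 1: the gcd of {n >= 1 : A^n(x,x) > 0} is 1 *)
Definition aperiodic (R : realType) (T : finType) (A : T -> T -> R) : Prop :=
  forall (x : T) (d : nat),
    (forall n : nat, (0 < n)%N -> 0 < mpow A n x x -> (d %| n)%N) -> d = 1%N.

Definition invariant_prob (R : realType) (T : finType) (A : T -> T -> R) (p : T -> R) : Prop :=
  (forall x, 0 <= p x) /\ \sum_(x : T) p x = 1 /\
  (forall y, \sum_(x : T) p x * A x y = p y).

Definition is_cycle (R : realType) (T : finType) (A : T -> T -> R) (n : nat) (x : nat -> T) : Prop :=
  forall k : nat, (k < n)%N -> 0 < A (x k) (x ((k.+1) %% n)%N).

Definition gcd_values_one (T : finType) (f : T -> T -> int) : Prop :=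
  forall d : nat, (forall x y, (d %| `|f x y|)%N) -> d = 1%N.

Definition cond_C1 (R : realType) (E : finType) (P Q : E -> E -> R) (f : E -> E -> int) : Prop :=
  exists (n : nat) (x y : nat -> E), (1 <= n)%N /\ is_cycle P n x /\ is_cycle Q n y /\
    (0 < \sum_(k < n) f (x k) (y k))%R.

Definition cond_C2 (R : realType) (E : finType) (P Q : E -> E -> R) (f : E -> E -> int) : Prop :=
  forall T : nat, (1 <= T)%N ->
  exists (n : nat) (x y : nat -> E), (1 <= n)%N /\ is_cycle P n x /\ is_cycle Q n y /\
    \sum_(k < n) f (x k) (y k) != \sum_(k < n) f (x k) (y ((k + T) %% n)%N).

Definition Phi (R : realType) (E : finType) (P Q : E -> E -> R) (f : E -> E -> int)
  (theta : R) : (E * E)%type -> (E * E)%type -> R :=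
  fun u v => expR (theta * (f v.1 v.2)%:~R) * P u.1 v.1 * Q u.2 v.2.

Definition eigenvalue (R : realType) (T : finType) (A : T -> T -> R) (l : R[i]) : Prop :=
  exists v : T -> R[i], (exists i, v i != 0) /\
    forall i, \sum_(j : T) (A i j)%:C%C * v j = l * v i.

Definition spectral_radius_is (R : realType) (T : finType) (A : T -> T -> R) (rho : R) : Prop :=
  (exists l, eigenvalue A l /\ `|l| = rho%:C%C) /\
  (forall l, eigenvalue A l -> `|l| <= rho%:C%C).

Definition Rstar (R : realType) (E : finType) (P Q : E -> E -> R) (f : E -> E -> int)
  (theta : R) (r : (E * E)%type -> R) : (E * E)%type -> (E * E)%type -> R :=
  fun u v => r v / r u * Phi P Q f theta u v.

Definition integ (R : realType) (E : finType) (nu : (E * E)%type -> R) (f : E -> E -> int) : R :=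
  \sum_(u : (E * E)%type) nu u * (f u.1 u.2)%:~R.

Definition prodm (R : realType) (E : finType) (p q : E -> R) : (E * E)%type -> R :=
  fun u => p u.1 * q u.2.

Definition marg1 (R : realType) (E : finType) (nu : (E * E)%type -> R) : E -> R :=
  fun x => \sum_(y : E) nu (x, y).
Definition marg2 (R : realType) (E : finType) (nu : (E * E)%type -> R) : E -> R :=
  fun y => \sum_(x : E) nu (x, y).

From HB Require Import structures.
From mathcomp Require Import all_boot all_order all_algebra.
From mathcomp Require Import complex.
From mathcomp Require Import reals.
From mathcomp Require Import sequences exp.
From mathcomp Require Import lra.
Import Order.TTheory GRing.Theory Num.Theory.
Local Open Scope ring_scope.

(* Let a = R* and pistar its stationary law. Along the stationary a-chain the
   first coordinate moves with a kernel K on E whose stationary law is the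
   marginal pistar_1; running an independent Q-chain beside it gives the
   kernel b = K x Q with stationary law pistar_1 x piQ. The log-density h of a
   with respect to P x Q is theta f(v) + ln r(v) - ln r(u), so the mean of h
   under the stationary edge flow of a chain with law nu is theta nu(f).
   Write h = ln (a / b) + (ln K - ln P): the second part has the same mean
   under both flows, since both project to the same flow of the first
   coordinate, while by Gibbs' inequality the first part has mean <= 0 under b
   and >= 0 under a. Equality would force a = b on the support of P x Q; then
   h depends on the first coordinates only, and its cycle sums, which are
   theta times those of f, could not depend on the Q-cycle, contrary to (C2).
   The second marginal follows by exchanging the two coordinates. *)

Set Implicit Arguments.
Unset Strict Implicit.
Unset Printing Implicit Defensive.

Lemma ltr_sum_at (R : numDomainType) (I : finType) (F G : I -> R) (i0 : I) :
  (forall i, F i <= G i) -> F i0 < G i0 -> \sum_i F i < \sum_i G i.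
Proof.
move=> leFG ltFG; rewrite (bigD1 i0) //= [ltRHS](bigD1 i0) //=.
by apply: ltr_leD => //; apply: ler_sum => i _.
Qed.

Lemma sumr_gt0_exists (R : realDomainType) (I : finType) (F : I -> R) :
  0 < \sum_i F i -> exists i, 0 < F i.
Proof.
move=> sum_gt0; apply/existsP; apply: contraTT sum_gt0 => /existsPn F_le0.
by rewrite -leNgt; apply: sumr_le0 => i _; rewrite leNgt F_le0.
Qed.

Section LogSum.
Variable R : realType.

Lemma ln_le_subr1 (x : R) : 0 < x -> ln x <= x - 1.
Proof. by move=> x_gt0; have := expR_ge1Dx (ln x); rewrite lnK ?posrE //; lra. Qed.

Lemma ln_lt_subr1 (x : R) : 0 < x -> x != 1 -> ln x < x - 1.
Proof.
move=> x_gt0 x_neq1; have /expR_gt1Dx : ln x != 0 by rewrite ln_eq0.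
by rewrite lnK ?posrE //; lra.
Qed.

Lemma mul_ln_div_le (p q : R) :
  0 <= p -> 0 <= q -> (0 < p -> 0 < q) -> p * ln (q / p) <= q - p.
Proof.
rewrite le_eqVlt => /predU1P[<- q_ge0 _|p_gt0 _ /(_ p_gt0) q_gt0].
  by rewrite mul0r subr0.
have := ler_wpM2l (ltW p_gt0) (ln_le_subr1 (divr_gt0 q_gt0 p_gt0)).
by rewrite mulrBr mulr1 mulrCA divff ?gt_eqF // mulr1.
Qed.

Lemma mul_ln_div_lt (p q : R) :
  0 < p -> 0 < q -> q != p -> p * ln (q / p) < q - p.
Proof.
move=> p_gt0 q_gt0 q_neq_p; have : q / p != 1.
  by apply: contra q_neq_p => /eqP/divr1_eq ->.
move=> /(ln_lt_subr1 (divr_gt0 q_gt0 p_gt0)); rewrite -(ltr_pM2l p_gt0).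
by rewrite mulrBr mulr1 mulrCA divff ?gt_eqF // mulr1.
Qed.

(* Gibbs' inequality, row by row and averaged with the weights [m]. *)
Lemma sum_kernel_ln_div_le0 (I J : finType) (m : I -> R) (a b : I -> J -> R) :
  (forall i, 0 <= m i) -> (forall i j, 0 <= a i j) -> (forall i j, 0 <= b i j) ->
  (forall i j, 0 < b i j -> 0 < a i j) ->
  (forall i, \sum_j a i j = \sum_j b i j) ->
  \sum_i \sum_j m i * b i j * ln (a i j / b i j) <= 0.
Proof.
move=> m_ge0 a_ge0 b_ge0 supp_ba rows.
apply: (le_trans (y := \sum_i m i * \sum_j (a i j - b i j))).
  apply: ler_sum => i _; rewrite mulr_sumr; apply: ler_sum => j _.
  by rewrite -mulrA ler_wpM2l // mul_ln_div_le // => /supp_ba.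
by rewrite big1 // => i _; rewrite sumrB rows subrr mulr0.
Qed.

Lemma sum_kernel_ln_div_lt0 (I J : finType) (m : I -> R) (a b : I -> J -> R)
    (i0 : I) (j0 : J) :
  (forall i, 0 <= m i) -> (forall i j, 0 <= a i j) -> (forall i j, 0 <= b i j) ->
  (forall i j, 0 < b i j -> 0 < a i j) ->
  (forall i, \sum_j a i j = \sum_j b i j) ->
  0 < m i0 -> 0 < b i0 j0 -> a i0 j0 != b i0 j0 ->
  \sum_i \sum_j m i * b i j * ln (a i j / b i j) < 0.
Proof.
move=> m_ge0 a_ge0 b_ge0 supp_ba rows m_gt0 b_gt0 a_neq_b.
apply: (lt_le_trans (y := \sum_i m i * \sum_j (a i j - b i j))).
  apply: (ltr_sum_at (i0 := i0)) => [i|]; rewrite mulr_sumr.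
    by apply: ler_sum => j _; rewrite -mulrA ler_wpM2l // mul_ln_div_le // => /supp_ba.
  apply: (ltr_sum_at (i0 := j0)) => [j|]; rewrite -mulrA.
    by rewrite ler_wpM2l // mul_ln_div_le // => /supp_ba.
  by rewrite ltr_pM2l // mul_ln_div_lt // supp_ba.
by rewrite big1 // => i _; rewrite sumrB rows subrr mulr0.
Qed.

End LogSum.

Section Flows.
Variables (R : pzRingType) (I : finType).

Lemma balanced_flow_sum (M : I -> I -> R) (m F L : I -> R) :
  (forall v, \sum_u M u v = m v) -> (forall u, \sum_v M u v = m u) ->
  \sum_u \sum_v M u v * (F v + L v - L u) = \sum_v m v * F v.
Proof.
move=> cols rows.
under eq_bigr do under eq_bigr do rewrite mulrBr mulrDr.
rewrite (eq_bigr (fun u => \sum_v M u v * F v + \sum_v M u v * L v - m u * L u));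
  last by move=> u _; rewrite !big_split /= sumrN -mulr_suml rows.
rewrite !big_split /= sumrN exchange_big [X in _ + X - _]exchange_big /=.
under eq_bigr do rewrite -mulr_suml cols.
under [X in _ + X - _]eq_bigr do rewrite -mulr_suml cols.
by rewrite addrK.
Qed.

Lemma eq_weighted_sum (M g g' : I -> I -> R) :
  (forall u v, M u v != 0 -> g u v = g' u v) ->
  \sum_u \sum_v M u v * g u v = \sum_u \sum_v M u v * g' u v.
Proof.
move=> eq_g; apply: eq_bigr => u _; apply: eq_bigr => v _.
by have [->|/eq_g ->] := eqVneq (M u v) 0; rewrite ?mul0r.
Qed.

End Flows.

Lemma sum_pair (V : nmodType) (E : finType) (F : (E * E)%type -> V) :
  \sum_u F u = \sum_x \sum_y F (x, y).
Proof. by rewrite pair_bigA; apply: eq_bigr => -[]. Qed.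

Lemma sum_pair_swap (V : nmodType) (E : finType) (F : (E * E)%type -> V) :
  \sum_u F (u.2, u.1) = \sum_u F u.
Proof. by rewrite !sum_pair exchange_big. Qed.

Lemma sum_pair_flow (R : pzSemiRingType) (E : finType)
    (M : (E * E)%type -> (E * E)%type -> R) (g : E -> E -> R) :
  \sum_u \sum_v M u v * g u.1 v.1 =
  \sum_x0 \sum_x1 (\sum_y0 \sum_y1 M (x0, y0) (x1, y1)) * g x0 x1.
Proof.
rewrite sum_pair; apply: eq_bigr => x0 _; under eq_bigr do rewrite sum_pair.
rewrite exchange_big; apply: eq_bigr => x1 _; rewrite mulr_suml.
by apply: eq_bigr => y0 _; rewrite mulr_suml.
Qed.

Section Irreducible.
Variables (R : realType) (T : finType) (A : T -> T -> R).
Hypothesis A_ge0 : forall x y, 0 <= A x y.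

Lemma mpowS_gt0 n x y :
  0 < mpow A n.+1 x y -> exists2 z, 0 < mpow A n x z & 0 < A z y.
Proof.
move=> /sumr_gt0_exists[z mA_gt0].
have A_gt0 : 0 < A z y.
  by rewrite lt_def A_ge0 andbT; apply: contraTneq mA_gt0 => ->; rewrite mulr0 ltxx.
by exists z; rewrite // -(pmulr_lgt0 _ A_gt0).
Qed.

Lemma irreducible_gt0 (p : T -> R) :
  irreducible A -> (forall x, 0 <= p x) -> \sum_x p x != 0 ->
  (forall x y, 0 < A x y -> p y = 0 -> p x = 0) ->
  forall y, 0 < p y.
Proof.
move=> irrA p_ge0 sum_neq0 pred_closed y; rewrite lt_def p_ge0 andbT.
apply: contra sum_neq0 => /eqP py0; apply/eqP/big1 => x _.
have [n] := irrA x y; elim: n y py0 => [|n IHn] y py0 /=.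
  by case: eqVneq => [-> _ //|_]; rewrite ltxx.
by move=> /mpowS_gt0[z mpow_gt0 /pred_closed/(_ py0) pz0]; apply: IHn mpow_gt0.
Qed.

Lemma invariant_prob_gt0 (p : T -> R) :
  irreducible A -> invariant_prob A p -> forall y, 0 < p y.
Proof.
move=> irrA [p_ge0 [sum_p1 p_inv]]; apply: irreducible_gt0 => //.
  by rewrite sum_p1 oner_neq0.
move=> x y A_gt0 py0.
have prod_ge0 z : 0 <= p z * A z y by apply: mulr_ge0.
have /eqP := psumr_eq0P (fun z _ => prod_ge0 z) (etrans (p_inv y) py0) (i := x) isT.
by rewrite mulf_eq0 (gt_eqF A_gt0) orbF => /eqP.
Qed.

End Irreducible.

Lemma sum_mod_shift (V : nmodType) n m (g : nat -> V) :
  (0 < n)%N -> \sum_(k < n) g ((k + m) %% n)%N = \sum_(k < n) g k.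
Proof.
case: n => // n _; elim: m => [|m IHm].
  by apply: eq_bigr => k _; rewrite addn0 modn_small.
rewrite -IHm (eq_bigr (fun k : 'I_n.+1 => g ((k.+1 %% n.+1 + m) %% n.+1)%N));
  last by move=> k _; rewrite modnDml addSnnS.
rewrite big_ord_recr big_ord_recl /= modnn add0n addrC; congr (_ + _).
by apply: eq_bigr => k _; rewrite (@modn_small k.+1) ?ltnS // /bump leq0n add1n.
Qed.

Definition shift_cycle (T : Type) (n m : nat) (x : nat -> T) : nat -> T :=
  fun k => x ((k + m) %% n)%N.

Lemma shift_cycleS (T : Type) n m (x : nat -> T) k :
  shift_cycle n m.+1 x k = shift_cycle n m x (k.+1 %% n)%N.
Proof. by rewrite /shift_cycle modnDml addSnnS. Qed.

Lemma shift_cycle_predn (T : Type) n (x : nat -> T) k :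
  (k < n)%N -> shift_cycle n n.-1 x ((k + 1) %% n)%N = x k.
Proof.
move=> k_lt_n; have n_gt0 : (0 < n)%N by apply: leq_ltn_trans k_lt_n.
by rewrite /shift_cycle modnDml -addnA add1n prednK // modnDr modn_small.
Qed.

Section Cycles.
Variables (R : realType) (T : finType).

Definition cycle_sum (g : T -> T -> R) (n : nat) (x : nat -> T) : R :=
  \sum_(k < n) g (x k) (x (k.+1 %% n)%N).

Lemma is_cycle_shift (A : T -> T -> R) n m x :
  (0 < n)%N -> is_cycle A n x -> is_cycle A n (shift_cycle n m x).
Proof.
move=> n_gt0 x_cyc k _; rewrite -shift_cycleS /shift_cycle.
have := x_cyc _ (ltn_pmod (k + m) n_gt0).
by rewrite -addn1 modnDml addn1 addnS.
Qed.

Lemma cycle_sum_coboundary (F L : T -> R) n x : (0 < n)%N ->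
  cycle_sum (fun u v => F v + L v - L u) n x = \sum_(k < n) F (x k).
Proof.
move=> n_gt0; rewrite /cycle_sum sumrB big_split /=.
have shift1 (G : T -> R) : \sum_(k < n) G (x (k.+1 %% n)%N) = \sum_(k < n) G (x k).
  rewrite -(@sum_mod_shift _ n 1 (fun k => G (x k)) n_gt0).
  by apply: eq_bigr => k _; rewrite addn1.
by rewrite !shift1 addrK.
Qed.

End Cycles.

Section DecoupledChain.
Variables (R : realType) (E : finType) (P Q : E -> E -> R) (piQ : E -> R).
Variables (a : (E * E)%type -> (E * E)%type -> R) (pistar : (E * E)%type -> R).
Hypotheses (P_ge0 : forall x y, 0 <= P x y) (P_irr : irreducible P).
Hypotheses (Q_stoch : stochastic Q) (Q_irr : irreducible Q).
Hypothesis piQ_inv : invariant_prob Q piQ.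
Hypothesis a_stoch : stochastic a.
Hypothesis a_gt0 : forall u v, 0 < a u v <-> 0 < P u.1 v.1 /\ 0 < Q u.2 v.2.
Hypothesis pistar_inv : invariant_prob a pistar.

Let Q_ge0 := proj1 Q_stoch.
Let a_ge0 := proj1 a_stoch.
Let pistar_ge0 := proj1 pistar_inv.
Let piQ_gt0 := invariant_prob_gt0 Q_ge0 Q_irr piQ_inv.

Let Q_succ y0 : exists y1, 0 < Q y0 y1.
Proof. by apply: sumr_gt0_exists; rewrite (proj2 Q_stoch) ltr01. Qed.

Local Notation pistar1 := (marg1 pistar).

(* [flow1] is the stationary edge flow of the first coordinate of the
   a-chain and [kernel1] its transition kernel; [decoupled_kernel] runs it
   beside an independent Q-chain, with invariant law [decoupled_law]. *)
Definition flow1 x0 x1 := \sum_y0 \sum_y1 pistar (x0, y0) * a (x0, y0) (x1, y1).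

Definition kernel1 x0 x1 := flow1 x0 x1 / pistar1 x0.

Definition decoupled_kernel (u v : E * E) := kernel1 u.1 v.1 * Q u.2 v.2.

Definition decoupled_law (u : E * E) := pistar1 u.1 * piQ u.2.

(* Meaningful only on the support of P x Q, where all three logarithms are
   taken of positive numbers. *)
Definition log_density u v := ln (a u v) - ln (P u.1 v.1) - ln (Q u.2 v.2).

Lemma flow1_ge0 x0 x1 : 0 <= flow1 x0 x1.
Proof. by do 2![apply: sumr_ge0 => ? _]; rewrite mulr_ge0 ?pistar_ge0 ?a_ge0. Qed.

Lemma sum_flow1_row x0 : \sum_x1 flow1 x0 x1 = pistar1 x0.
Proof.
rewrite /flow1 exchange_big; apply: eq_bigr => y0 _.
transitivity (pistar (x0, y0) * \sum_v a (x0, y0) v); last by rewrite (proj2 a_stoch) mulr1.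
by rewrite mulr_sumr sum_pair.
Qed.

Lemma sum_flow1_col x1 : \sum_x0 flow1 x0 x1 = pistar1 x1.
Proof.
rewrite /flow1; under eq_bigr do rewrite exchange_big.
rewrite exchange_big; apply: eq_bigr => y1 _.
by rewrite -(proj2 (proj2 pistar_inv)) sum_pair.
Qed.

Lemma flow1_eq0 x0 x1 y0 y1 :
  flow1 x0 x1 = 0 -> pistar (x0, y0) * a (x0, y0) (x1, y1) = 0.
Proof.
move=> flow_eq0.
have term_ge0 y y' : 0 <= pistar (x0, y) * a (x0, y) (x1, y') by apply: mulr_ge0.
have inner_ge0 y : 0 <= \sum_y' pistar (x0, y) * a (x0, y) (x1, y').
  by apply: sumr_ge0 => y' _.
have := psumr_eq0P (fun y _ => inner_ge0 y) flow_eq0 (i := y0) isT.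
by move/(psumr_eq0P (fun y' _ => term_ge0 y0 y'))/(_ y1 isT).
Qed.

Lemma marg1_gt0 x : 0 < pistar1 x.
Proof.
apply: (irreducible_gt0 P_ge0 P_irr) => [x0|| x0 x1 P_gt0 pistar1_eq0].
- by apply: sumr_ge0.
- by rewrite -sum_pair (proj1 (proj2 pistar_inv)) oner_neq0.
apply: big1 => y0 _; have [y1 Q_gt0] := Q_succ y0.
have flow_eq0 : flow1 x0 x1 = 0.
  by apply: (psumr_eq0P (P := xpredT) (fun x _ => flow1_ge0 x x1)); rewrite ?sum_flow1_col.
move/eqP: (flow1_eq0 y0 y1 flow_eq0); rewrite mulf_eq0 => /predU1P[//|].
by rewrite gt_eqF // a_gt0.
Qed.

Lemma flow1_gt0 x0 x1 : (0 < flow1 x0 x1) = (0 < P x0 x1).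
Proof.
apply/idP/idP => [/sumr_gt0_exists[y0 /sumr_gt0_exists[y1]]|P_gt0].
  by rewrite mulr_ge0_gt0 // => /andP[_ /a_gt0[]].
rewrite lt_def flow1_ge0 andbT; apply/eqP => flow_eq0.
have [y0 pistar_gt0] := sumr_gt0_exists (marg1_gt0 x0).
have [y1 Q_gt0] := Q_succ y0.
move/eqP: (flow1_eq0 y0 y1 flow_eq0); rewrite mulf_eq0 gt_eqF //=.
by rewrite gt_eqF // a_gt0.
Qed.

Lemma marg1_kernel1 x0 x1 : pistar1 x0 * kernel1 x0 x1 = flow1 x0 x1.
Proof. by rewrite mulrC divfK // gt_eqF // marg1_gt0. Qed.

Lemma kernel1_ge0 x0 x1 : 0 <= kernel1 x0 x1.
Proof. by rewrite divr_ge0 ?flow1_ge0 ?ltW ?marg1_gt0. Qed.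

Lemma kernel1_gt0 x0 x1 : (0 < kernel1 x0 x1) = (0 < P x0 x1).
Proof. by rewrite pmulr_lgt0 ?invr_gt0 ?marg1_gt0 ?flow1_gt0. Qed.

Lemma sum_kernel1 x0 : \sum_x1 kernel1 x0 x1 = 1.
Proof. by rewrite -mulr_suml sum_flow1_row divff // gt_eqF // marg1_gt0. Qed.

Lemma decoupled_kernel_ge0 u v : 0 <= decoupled_kernel u v.
Proof. by rewrite mulr_ge0 ?kernel1_ge0. Qed.

Lemma decoupled_kernel_gt0 u v :
  0 < decoupled_kernel u v <-> 0 < P u.1 v.1 /\ 0 < Q u.2 v.2.
Proof. by rewrite mulr_ge0_gt0 ?kernel1_ge0 // kernel1_gt0; split=> /andP. Qed.

Lemma sum_decoupled_kernel u : \sum_v decoupled_kernel u v = 1.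
Proof.
rewrite sum_pair -(sum_kernel1 u.1); apply: eq_bigr => x1 _.
by rewrite /decoupled_kernel /= -mulr_sumr (proj2 Q_stoch) mulr1.
Qed.

Lemma decoupled_law_ge0 u : 0 <= decoupled_law u.
Proof. by rewrite mulr_ge0 ?ltW ?marg1_gt0 ?piQ_gt0. Qed.

Lemma decoupled_law_gt0 u : 0 < decoupled_law u.
Proof. by rewrite mulr_gt0 ?marg1_gt0 ?piQ_gt0. Qed.

Lemma decoupled_law_inv v :
  \sum_u decoupled_law u * decoupled_kernel u v = decoupled_law v.
Proof.
rewrite sum_pair [RHS]/decoupled_law -sum_flow1_col mulr_suml; apply: eq_bigr => x0 _.
rewrite -marg1_kernel1 -(proj2 (proj2 piQ_inv)) !mulr_sumr.
by apply: eq_bigr => y0 _; rewrite /decoupled_law /decoupled_kernel /=; lra.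
Qed.

Lemma flow1_decoupled x0 x1 : \sum_y0 \sum_y1
  decoupled_law (x0, y0) * decoupled_kernel (x0, y0) (x1, y1) = flow1 x0 x1.
Proof.
rewrite -marg1_kernel1 -[RHS]mulr1 -(proj1 (proj2 piQ_inv)) !mulr_sumr.
apply: eq_bigr => y0 _; rewrite -[RHS]mulr1 -(proj2 Q_stoch y0) !mulr_sumr.
by apply: eq_bigr => y1 _; rewrite /decoupled_law /decoupled_kernel /=; lra.
Qed.

Lemma log_density_split u v : 0 < P u.1 v.1 -> 0 < Q u.2 v.2 ->
  log_density u v = ln (a u v) - ln (decoupled_kernel u v)
                    + (ln (kernel1 u.1 v.1) - ln (P u.1 v.1)).
Proof.
move=> P_gt0 Q_gt0; rewrite /log_density /decoupled_kernel.
by rewrite lnM ?posrE ?kernel1_gt0 //; lra.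
Qed.

Definition kernel1_divergence :=
  \sum_x0 \sum_x1 flow1 x0 x1 * (ln (kernel1 x0 x1) - ln (P x0 x1)).

Lemma sum_flow_log_density (M : (E * E)%type -> (E * E)%type -> R) :
  (forall u v, M u v != 0 -> 0 < P u.1 v.1 /\ 0 < Q u.2 v.2) ->
  (forall x0 x1, \sum_y0 \sum_y1 M (x0, y0) (x1, y1) = flow1 x0 x1) ->
  \sum_u \sum_v M u v * log_density u v =
  \sum_u \sum_v M u v * (ln (a u v) - ln (decoupled_kernel u v))
  + kernel1_divergence.
Proof.
move=> M_supp M_flow1.
have -> : kernel1_divergence = \sum_x0 \sum_x1 (\sum_y0 \sum_y1 M (x0, y0) (x1, y1))
                                 * (ln (kernel1 x0 x1) - ln (P x0 x1)).
  by apply: eq_bigr => x0 _; apply: eq_bigr => x1 _; rewrite M_flow1.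
rewrite -(sum_pair_flow M (fun x0 x1 => ln (kernel1 x0 x1) - ln (P x0 x1))).
rewrite -big_split; apply: eq_bigr => u _.
rewrite -big_split; apply: eq_bigr => v _ /=; rewrite -mulrDr.
by have [->|/M_supp[P_gt0 Q_gt0]] := eqVneq (M u v) 0; rewrite ?mul0r ?log_density_split.
Qed.

Lemma decoupled_flow_supp u v : decoupled_law u * decoupled_kernel u v != 0 ->
  0 < P u.1 v.1 /\ 0 < Q u.2 v.2.
Proof.
rewrite mulf_eq0 negb_or => /andP[_ kernel_neq0]; apply/decoupled_kernel_gt0.
by rewrite lt_def kernel_neq0 decoupled_kernel_ge0.
Qed.

Lemma stationary_flow_supp u v : pistar u * a u v != 0 ->
  0 < P u.1 v.1 /\ 0 < Q u.2 v.2.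
Proof.
by rewrite mulf_eq0 negb_or => /andP[_ a_neq0]; apply/a_gt0; rewrite lt_def a_neq0 a_ge0.
Qed.

Lemma decoupled_ln_ratio u v : decoupled_law u * decoupled_kernel u v != 0 ->
  ln (a u v) - ln (decoupled_kernel u v) = ln (a u v / decoupled_kernel u v).
Proof.
move=> /decoupled_flow_supp supp.
by rewrite ln_div ?posrE; [|apply/a_gt0|apply/decoupled_kernel_gt0].
Qed.

Lemma decoupled_log_density_lt u0 v0 :
  0 < decoupled_kernel u0 v0 -> a u0 v0 != decoupled_kernel u0 v0 ->
  \sum_u \sum_v decoupled_law u * decoupled_kernel u v * log_density u v
  < kernel1_divergence.
Proof.
move=> kernel_gt0 a_neq.
rewrite sum_flow_log_density ?gtrDr; [|exact: decoupled_flow_supp|exact: flow1_decoupled].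
rewrite (eq_weighted_sum decoupled_ln_ratio).
apply: (sum_kernel_ln_div_lt0 (i0 := u0) (j0 := v0)) => //.
- exact: decoupled_law_ge0.
- exact: decoupled_kernel_ge0.
- by move=> u v /decoupled_kernel_gt0/a_gt0.
- by move=> u; rewrite (proj2 a_stoch) sum_decoupled_kernel.
exact: decoupled_law_gt0.
Qed.

Lemma kernel1_divergence_le_stationary :
  kernel1_divergence <= \sum_u \sum_v pistar u * a u v * log_density u v.
Proof.
rewrite sum_flow_log_density ?lerDr //; last exact: stationary_flow_supp.
rewrite (eq_weighted_sum (g' := fun u v => - ln (decoupled_kernel u v / a u v))).
  under eq_bigr do under eq_bigr do rewrite mulrN.
  under eq_bigr do rewrite sumrN.
  rewrite sumrN oppr_ge0; apply: sum_kernel_ln_div_le0 => //.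
  - exact: decoupled_kernel_ge0.
  - by move=> u v /a_gt0/decoupled_kernel_gt0.
  - by move=> u; rewrite (proj2 a_stoch) sum_decoupled_kernel.
move=> u v /stationary_flow_supp supp.
by rewrite ln_div ?posrE ?opprB; [|apply/decoupled_kernel_gt0|apply/a_gt0].
Qed.

Lemma log_density_decoupled u v :
  (forall u v, 0 < decoupled_kernel u v -> a u v = decoupled_kernel u v) ->
  0 < P u.1 v.1 -> 0 < Q u.2 v.2 ->
  log_density u v = ln (kernel1 u.1 v.1) - ln (P u.1 v.1).
Proof.
move=> a_eq P_gt0 Q_gt0; rewrite log_density_split // a_eq ?subrr ?add0r //.
exact/decoupled_kernel_gt0.
Qed.

Lemma decoupled_lt_stationary n x y y' :
  is_cycle P n x -> is_cycle Q n y -> is_cycle Q n y' ->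
  cycle_sum log_density n (fun k => (x k, y k)) !=
  cycle_sum log_density n (fun k => (x k, y' k)) ->
  \sum_u \sum_v decoupled_law u * decoupled_kernel u v * log_density u v
  < \sum_u \sum_v pistar u * a u v * log_density u v.
Proof.
move=> x_cyc y_cyc y'_cyc sums_neq.
apply: (lt_le_trans _ kernel1_divergence_le_stationary).
have [/existsP[u /existsP[v /andP[kernel_gt0 a_neq]]]|/existsPn a_eq] := boolP
  [exists u, exists v, (0 < decoupled_kernel u v) && (a u v != decoupled_kernel u v)].
  exact: decoupled_log_density_lt kernel_gt0 a_neq.
have {}a_eq u v : 0 < decoupled_kernel u v -> a u v = decoupled_kernel u v.
  by move=> kernel_gt0; apply/eqP; move/existsPn/(_ v): (a_eq u); rewrite kernel_gt0 negbK.
have sum_decoupled z : is_cycle Q n z ->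
    cycle_sum log_density n (fun k => (x k, z k)) =
    cycle_sum (fun x0 x1 => ln (kernel1 x0 x1) - ln (P x0 x1)) n x.
  move=> z_cyc; apply: eq_bigr => k _.
  by rewrite log_density_decoupled //; [apply: x_cyc | apply: z_cyc].
by move: sums_neq; rewrite !sum_decoupled ?eqxx.
Qed.

Lemma decoupled_mean_lt (F L : E * E -> R) n x y y' :
  (forall u v, 0 < P u.1 v.1 -> 0 < Q u.2 v.2 ->
     log_density u v = F v + L v - L u) ->
  (0 < n)%N -> is_cycle P n x -> is_cycle Q n y -> is_cycle Q n y' ->
  \sum_(k < n) F (x k, y k) != \sum_(k < n) F (x k, y' k) ->
  \sum_u decoupled_law u * F u < \sum_u pistar u * F u.
Proof.
move=> potential n_gt0 x_cyc y_cyc y'_cyc F_neq.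
have to_potential (M : (E * E)%type -> (E * E)%type -> R) :
    (forall u v, M u v != 0 -> 0 < P u.1 v.1 /\ 0 < Q u.2 v.2) ->
    \sum_u \sum_v M u v * log_density u v =
    \sum_u \sum_v M u v * (F v + L v - L u).
  by move=> M_supp; apply: eq_weighted_sum => u v /M_supp[]; apply: potential.
have cycle_sum_F z : is_cycle Q n z ->
    cycle_sum log_density n (fun k => (x k, z k)) = \sum_(k < n) F (x k, z k).
  move=> z_cyc; rewrite -(cycle_sum_coboundary F L (fun k => (x k, z k)) n_gt0).
  by apply: eq_bigr => k _; apply: potential; [apply: x_cyc | apply: z_cyc].
rewrite -(balanced_flow_sum
  (M := fun u v => decoupled_law u * decoupled_kernel u v) F L decoupled_law_inv).
  rewrite -(balanced_flow_sum (M := fun u v => pistar u * a u v) F L).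
  - rewrite -!to_potential; [|exact: stationary_flow_supp|exact: decoupled_flow_supp].
    by apply: (decoupled_lt_stationary x_cyc y_cyc y'_cyc); rewrite !cycle_sum_F.
  - exact: (proj2 (proj2 pistar_inv)).
  - by move=> u; rewrite -mulr_sumr (proj2 a_stoch) mulr1.
by move=> u; rewrite -mulr_sumr sum_decoupled_kernel mulr1.
Qed.

End DecoupledChain.

Section TiltedChain.
Variables (R : realType) (E : finType) (P Q : E -> E -> R) (f : E -> E -> int).
Variables (theta : R) (r : (E * E)%type -> R).
Hypotheses (P_ge0 : forall x y, 0 <= P x y) (Q_ge0 : forall x y, 0 <= Q x y).
Hypothesis r_gt0 : forall u, 0 < r u.

Local Notation a := (Rstar P Q f theta r).

Lemma Rstar_gt0 u v : 0 < a u v <-> 0 < P u.1 v.1 /\ 0 < Q u.2 v.2.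
Proof.
rewrite /Rstar /Phi pmulr_rgt0 ?divr_gt0 // mulr_ge0_gt0 ?mulr_ge0 ?expR_ge0 //.
by rewrite pmulr_rgt0 ?expR_gt0 //; split=> /andP.
Qed.

Lemma Rstar_stochastic :
  (forall u, \sum_v Phi P Q f theta u v * r v = r u) -> stochastic a.
Proof.
move=> r_eigen; split=> [u v|u].
  by rewrite /Rstar /Phi !mulr_ge0 ?invr_ge0 ?expR_ge0 ?P_ge0 ?Q_ge0 ?ltW ?r_gt0.
rewrite -(divff (lt0r_neq0 (r_gt0 u))) -{1}(r_eigen u) mulr_suml.
by apply: eq_bigr => v _; rewrite /Rstar mulrC mulrA.
Qed.

Lemma log_density_Rstar u v : 0 < P u.1 v.1 -> 0 < Q u.2 v.2 ->
  log_density P Q a u v = theta * (f v.1 v.2)%:~R + ln (r v) - ln (r u).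
Proof.
move=> P_gt0 Q_gt0; rewrite /log_density /Rstar /Phi.
rewrite lnM ?posrE ?divr_gt0 ?mulr_gt0 ?expR_gt0 // ln_div ?posrE //.
rewrite !lnM ?posrE ?mulr_gt0 ?expR_gt0 // expRK.
lra.
Qed.

End TiltedChain.

Lemma first_marginal_tilt_lt (R : realType) (E : finType) (P Q : E -> E -> R)
    (piQ : E -> R) (f : E -> E -> int) (theta : R) (r pistar : (E * E)%type -> R)
    (n : nat) (x y y' : nat -> E) :
  stochastic P -> stochastic Q -> irreducible P -> irreducible Q ->
  invariant_prob Q piQ -> 0 < theta -> (forall u, 0 < r u) ->
  (forall u, \sum_v Phi P Q f theta u v * r v = r u) ->
  invariant_prob (Rstar P Q f theta r) pistar ->
  (0 < n)%N -> is_cycle P n x -> is_cycle Q n y -> is_cycle Q n y' ->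
  \sum_(k < n) f (x k) (y k) != \sum_(k < n) f (x k) (y' k) ->
  integ (prodm (marg1 pistar) piQ) f < integ pistar f.
Proof.
move=> [P_ge0 _] Q_stoch P_irr Q_irr piQ_inv theta_gt0 r_gt0 r_eigen pistar_inv.
move=> n_gt0 x_cyc y_cyc y'_cyc f_neq.
have a_stoch : stochastic (Rstar P Q f theta r).
  by apply: Rstar_stochastic => //; case: Q_stoch.
have a_gt0 u v : 0 < Rstar P Q f theta r u v <-> 0 < P u.1 v.1 /\ 0 < Q u.2 v.2.
  by apply: Rstar_gt0 => //; case: Q_stoch.
rewrite -(ltr_pM2l theta_gt0) /integ !mulr_sumr.
under eq_bigr do rewrite mulrCA.
under [ltRHS]eq_bigr do rewrite mulrCA.
apply: (decoupled_mean_lt P_ge0 P_irr Q_stoch Q_irr piQ_inv a_stoch a_gt0 pistar_inv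
          (L := fun u => ln (r u)) _ n_gt0 x_cyc y_cyc y'_cyc).
  by move=> u v; apply: log_density_Rstar.
by rewrite -!mulr_sumr (inj_eq (mulfI (lt0r_neq0 theta_gt0))) -!rmorph_sum eqr_int.
Qed.

Section Transpose.
Variables (R : realType) (E : finType).

Definition swap (u : E * E) : E * E := (u.2, u.1).

Lemma invariant_prob_swap (A B : (E * E)%type -> (E * E)%type -> R) p :
  (forall u v, B u v = A (swap u) (swap v)) ->
  invariant_prob A p -> invariant_prob B (fun u => p (swap u)).
Proof.
move=> BE [p_ge0 [sum_p1 p_inv]]; split=> //; split; first by rewrite sum_pair_swap.
move=> v; rewrite -p_inv -(sum_pair_swap (fun u => p u * A u (swap v))).
by apply: eq_bigr => u _; rewrite BE.
Qed.

Lemma Phi_swap (P Q : E -> E -> R) (f : E -> E -> int) theta u v :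
  Phi Q P (fun x y => f y x) theta u v = Phi P Q f theta (swap u) (swap v).
Proof. by rewrite /Phi mulrAC. Qed.

Lemma integ_swap (nu : (E * E)%type -> R) (f : E -> E -> int) :
  integ (fun u => nu (swap u)) (fun x y => f y x) = integ nu f.
Proof. exact: (sum_pair_swap (fun u => nu u * (f u.1 u.2)%:~R)). Qed.

Lemma integ_prodm_swap (p q : E -> R) (f : E -> E -> int) :
  integ (prodm q p) (fun x y => f y x) = integ (prodm p q) f.
Proof.
rewrite -(integ_swap (prodm p q)) /integ; apply: eq_bigr => u _.
by rewrite /prodm /swap /= [q _ * _]mulrC.
Qed.

End Transpose.

Lemma second_marginal_tilt_lt (R : realType) (E : finType) (P Q : E -> E -> R)
    (piP : E -> R) (f : E -> E -> int) (theta : R) (r pistar : (E * E)%type -> R)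
    (n : nat) (x x' y : nat -> E) :
  stochastic P -> stochastic Q -> irreducible P -> irreducible Q ->
  invariant_prob P piP -> 0 < theta -> (forall u, 0 < r u) ->
  (forall u, \sum_v Phi P Q f theta u v * r v = r u) ->
  invariant_prob (Rstar P Q f theta r) pistar ->
  (0 < n)%N -> is_cycle P n x -> is_cycle P n x' -> is_cycle Q n y ->
  \sum_(k < n) f (x k) (y k) != \sum_(k < n) f (x' k) (y k) ->
  integ (prodm piP (marg2 pistar)) f < integ pistar f.
Proof.
move=> P_stoch Q_stoch P_irr Q_irr piP_inv theta_gt0 r_gt0 r_eigen pistar_inv.
move=> n_gt0 x_cyc x'_cyc y_cyc f_neq.
rewrite -integ_prodm_swap -[integ pistar f]integ_swap.
apply: (first_marginal_tilt_lt (f := fun x y => f y x) (r := fun u => r (swap u))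
          (pistar := fun u => pistar (swap u)) Q_stoch P_stoch Q_irr P_irr
          piP_inv theta_gt0 _ _ _ n_gt0 y_cyc x_cyc x'_cyc f_neq) => //.
- move=> u; rewrite -r_eigen -(sum_pair_swap (fun v => Phi P Q f theta (swap u) v * r v)).
  by apply: eq_bigr => v _; rewrite Phi_swap.
- by apply: invariant_prob_swap pistar_inv => u v; rewrite /Rstar Phi_swap.
Qed.

Unset Implicit Arguments.
Set Strict Implicit.

Theorem lemma5p8 (R : realType) (E : finType) (P Q : E -> E -> R)
  (piP piQ : E -> R) (f : E -> E -> int)
  (theta : R) (r : (E * E)%type -> R) (pistar : (E * E)%type -> R) :
  stochastic P -> stochastic Q ->
  irreducible P -> aperiodic P -> irreducible Q -> aperiodic Q ->
  invariant_prob P piP -> invariant_prob Q piQ ->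
  gcd_values_one f ->
  integ (prodm piP piQ) f < 0 ->
  cond_C1 P Q f -> cond_C2 P Q f ->
  0 < theta -> spectral_radius_is (Phi P Q f theta) 1 ->
  (forall t : R, 0 < t -> spectral_radius_is (Phi P Q f t) 1 -> t = theta) ->
  (forall u, 0 < r u) ->
  (forall u, \sum_(v : (E * E)%type) Phi P Q f theta u v * r v = r u) ->
  invariant_prob (Rstar P Q f theta r) pistar ->
  integ (prodm (marg1 pistar) piQ) f < integ pistar f /\
  integ (prodm piP (marg2 pistar)) f < integ pistar f.
Proof.
move=> P_stoch Q_stoch P_irr _ Q_irr _ piP_inv piQ_inv _ _ _ C2 theta_gt0 _ _.
move=> r_gt0 r_eigen pistar_inv.
have [n [x [y [n_gt0 [x_cyc [y_cyc f_neq]]]]]] := C2 1%N isT.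
split.
  apply: (first_marginal_tilt_lt P_stoch Q_stoch P_irr Q_irr piQ_inv theta_gt0 r_gt0
            r_eigen pistar_inv n_gt0 x_cyc y_cyc (is_cycle_shift 1 n_gt0 y_cyc) f_neq).
(* Shifting x back by one step changes the cycle sum as shifting y forward does. *)
apply: (second_marginal_tilt_lt P_stoch Q_stoch P_irr Q_irr piP_inv theta_gt0 r_gt0
          r_eigen pistar_inv n_gt0 x_cyc (is_cycle_shift n.-1 n_gt0 x_cyc) y_cyc).
rewrite -(sum_mod_shift 1 (fun k => f (shift_cycle n n.-1 x k) (y k)) n_gt0).
by under [X in _ != X]eq_bigr => k _ do rewrite shift_cycle_predn //.
Qed.
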